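(* Let $(\mathcal{M}^n,g)$ be a mixed super quasi-Einstein manifold (notation as in the context) which is conformal Ricci pseudosymmetric, i.e. there is a function $F_{\mathrm{Ric}}$ on $U_{\mathrm{Ric}}=\{x\in\mathcal{M}:\mathrm{Ric}\neq\frac{r}{n}g \text{ at } x\}$ such that on $U_{\mathrm{Ric}}$, for all $X,Y,Z,W$, $\mathrm{Ric}(C(X,Y)Z,W)+\mathrm{Ric}(Z,C(X,Y)W)=F_{\mathrm{Ric}}\big(g(Y,Z)\mathrm{Ric}(X,W)-g(X,Z)\mathrm{Ric}(Y,W)+g(Y,W)\mathrm{Ric}(X,Z)-g(X,W)\mathrm{Ric}(Y,Z)\big)$. Put $m=-\frac{(n-2)R(\xi_2,\xi_1,\xi_1,\xi_2)}{\Psi_5}+\mathcal{D}(\xi_2,\xi_2)$ and define the 1-form $\mathcal{E}(X)=\Big(R(\xi_2,\xi_1,\xi_1,\xi_2)-\frac{\Psi_5}{n-2}\mathcal{D}(\xi_2,\xi_2)\Big)\mathcal{B}(X)+\frac{\Psi_5}{n-2}\mathcal{D}(X,\xi_2)$. Then on $U_{\mathrm{Ric}}$: (1) if $m$ is not an eigenvalue of $\mathcal{D}$ corresponding to the eigenvector $\xi_2$, then $R(X,Y,\xi_1,\xi_2)=\mathcal{E}(X)\mathcal{A}(Y)-\mathcal{A}(X)\mathcal{E}(Y)$ for all $X,Y$; (2) if $m$ is an eigenvalue of $\mathcal{D}$ corresponding to the eigenvector $\xi_2$, then $R(X,Y,\xi_1,\xi_2)=0$ for all $X,Y$.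
   Context: $(\mathcal{M}^n,g)$, $n\ge 3$, is a non-flat Riemannian manifold with Levi-Civita connection $\nabla$, curvature $R(X,Y)Z=\nabla_X\nabla_YZ-\nabla_Y\nabla_XZ-\nabla_{[X,Y]}Z$, $R(X,Y,Z,W)=g(R(X,Y)Z,W)$, Ricci tensor $\mathrm{Ric}(Y,Z)=\operatorname{trace}(X\mapsto R(X,Y)Z)$, Ricci operator $Q$ ($\mathrm{Ric}(X,Y)=g(QX,Y)$), scalar curvature $r$. The conformal curvature tensor is $C(X,Y)Z=R(X,Y)Z-\frac{1}{n-2}\big(\mathrm{Ric}(Y,Z)X-\mathrm{Ric}(X,Z)Y+g(Y,Z)QX-g(X,Z)QY\big)+\frac{r}{(n-1)(n-2)}\big(g(Y,Z)X-g(X,Z)Y\big)$. $\mathcal{M}$ is a mixed super quasi-Einstein manifold if $\mathrm{Ric}$ is not identically zero and $\mathrm{Ric}(X,Y)=\Psi_1 g(X,Y)+\Psi_2\mathcal{A}(X)\mathcal{A}(Y)+\Psi_3\mathcal{B}(X)\mathcal{B}(Y)+\Psi_4(\mathcal{A}(X)\mathcal{B}(Y)+\mathcal{B}(X)\mathcal{A}(Y))+\Psi_5\mathcal{D}(X,Y)$, where $\Psi_1,\dots,\Psi_5$ are smooth functions with $\Psi_2,\Psi_3,\Psi_4,\Psi_5\neq 0$; $\xi_1,\xi_2$ are vector fields with $g(\xi_1,\xi_1)=g(\xi_2,\xi_2)=1$, $g(\xi_1,\xi_2)=0$; $\mathcal{A}(X)=g(X,\xi_1)$, $\mathcal{B}(X)=g(X,\xi_2)$;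 $\mathcal{D}$ is a symmetric trace-free $(0,2)$-tensor with $\mathcal{D}(X,\xi_1)=0$ for all $X$. A number/function $b$ is an eigenvalue of $\mathcal{D}$ corresponding to the eigenvector $U$ if $\mathcal{D}(X,U)=b\,g(X,U)$ for all $X$. *)

(* Pointwise (tangent-space) model of the statement. *)
From HB Require Import structures.
From mathcomp Require Import all_boot all_order all_algebra.
From mathcomp Require Import reals.
Set Implicit Arguments. Unset Strict Implicit. Unset Printing Implicit Defensive.
Import Order.TTheory GRing.Theory Num.Theory.
Local Open Scope ring_scope.

Section Tangent.
Variables (R : realType) (n : nat).
Notation V := 'rV[R]_n.

(* the metric g at the point, in an orthonormal frame *)
Definition gm (u v : V) : R := \sum_(i < n) u 0 i * v 0 i.
Definition ev (i : 'I_n) : V := delta_mx 0 i.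

Definition curv_op := V -> V -> V -> V.

Definition is_curvature (Rm : curv_op) : Prop :=
  [/\ (forall a X X' Y Z, Rm (a *: X + X') Y Z = a *: Rm X Y Z + Rm X' Y Z),
      (forall a X Y Y' Z, Rm X (a *: Y + Y') Z = a *: Rm X Y Z + Rm X Y' Z),
      (forall a X Y Z Z', Rm X Y (a *: Z + Z') = a *: Rm X Y Z + Rm X Y Z'),
      (forall X Y Z, Rm X Y Z = - Rm Y X Z)
    & ((forall X Y Z W, gm (Rm X Y Z) W = - gm (Rm X Y W) Z)
       /\ (forall X Y Z, Rm X Y Z + Rm Y Z X + Rm Z X Y = 0))].

Variable Rm : curv_op.

Definition Rcov (X Y Z W : V) : R := gm (Rm X Y Z) W.
Definition Ric (Y Z : V) : R := \sum_(i < n) (Rm (ev i) Y Z) 0 i.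
Definition Qop (X : V) : V := \sum_(i < n) Ric X (ev i) *: ev i.
Definition scal : R := \sum_(i < n) Ric (ev i) (ev i).

Definition Conf (X Y Z : V) : V :=
  Rm X Y Z
  - (n%:R - 2)^-1 *: (Ric Y Z *: X - Ric X Z *: Y + gm Y Z *: Qop X - gm X Z *: Qop Y)
  + (scal / ((n%:R - 1) * (n%:R - 2))) *: (gm Y Z *: X - gm X Z *: Y).

Definition in_U_Ric : Prop :=
  ~ (forall X Y, Ric X Y = scal / n%:R * gm X Y).

Definition conf_ricci_pseudosym_with (F : R) : Prop :=
  forall X Y Z W,
    Ric (Conf X Y Z) W + Ric Z (Conf X Y W) =
    F * (gm Y Z * Ric X W - gm X Z * Ric Y W + gm Y W * Ric X Z - gm X W * Ric Y Z).

Definition is_MSQE (Psi1 Psi2 Psi3 Psi4 Psi5 : R) (xi1 xi2 : V) (D : V -> V -> R) : Prop :=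
  [/\ ~ (forall X Y, Ric X Y = 0),
      [/\ Psi2 != 0, Psi3 != 0, Psi4 != 0 & Psi5 != 0],
      [/\ gm xi1 xi1 = 1, gm xi2 xi2 = 1 & gm xi1 xi2 = 0],
      [/\ (forall a X X' Y, D (a *: X + X') Y = a * D X Y + D X' Y),
          (forall X Y, D X Y = D Y X),
          \sum_(i < n) D (ev i) (ev i) = 0
        & (forall X, D X xi1 = 0)]
    & (forall X Y, Ric X Y =
         Psi1 * gm X Y + Psi2 * (gm X xi1 * gm Y xi1) + Psi3 * (gm X xi2 * gm Y xi2)
         + Psi4 * (gm X xi1 * gm Y xi2 + gm X xi2 * gm Y xi1) + Psi5 * D X Y)].

End Tangent.

Definition is_eigen (R : realType) (n : nat) (D : 'rV[R]_n -> 'rV[R]_n -> R)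
  (b : R) (U : 'rV[R]_n) : Prop :=
  forall X, D X U = b * gm X U.

(** Put Z = W = xi1 in the pseudosymmetry condition.  Since Ric(., xi1) is dual to
    (Psi1 + Psi2) xi1 + Psi4 xi2 and C(X,Y) is skew for g, this forces
    C(X,Y,xi1,xi2) = F (B(X) A(Y) - A(X) B(Y)) after dividing by Psi4 <> 0.  Expanding C
    with the quasi-Einstein form of Ric gives
    R(X,Y,xi1,xi2) = K (B(X) A(Y) - A(X) B(Y)) + Psi5/(n-2) (A(Y) D(X,xi2) - A(X) D(Y,xi2))
    for a scalar K, and evaluating at (xi2, xi1) identifies
    K = R(xi2,xi1,xi1,xi2) - Psi5/(n-2) D(xi2,xi2), which is (1).  If xi2 is an
    eigenvector of D for m, evaluating at xi2 gives R(xi2,xi1,xi1,xi2) = 0 and then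
    E = 0, which is (2). *)

From HB Require Import structures.
From mathcomp Require Import all_boot all_order all_algebra.
From mathcomp Require Import reals.
From mathcomp Require Import ring lra.
Set Implicit Arguments. Unset Strict Implicit. Unset Printing Implicit Defensive.
Import Order.TTheory GRing.Theory Num.Theory.
Local Open Scope ring_scope.

Section FrameInnerProduct.
Variables (R : realType) (n : nat).
Implicit Types (u v w : 'rV[R]_n).

Lemma gmC u v : gm u v = gm v u.
Proof. by apply: eq_bigr => i _; rewrite mulrC. Qed.

Lemma gmDl u v w : gm (u + v) w = gm u w + gm v w.
Proof. by rewrite /gm -big_split; apply: eq_bigr => i _; rewrite mxE mulrDl. Qed.

Lemma gmZl a u w : gm (a *: u) w = a * gm u w.
Proof. by rewrite /gm mulr_sumr; apply: eq_bigr => i _; rewrite mxE mulrA. Qed.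

Lemma gmNl u w : gm (- u) w = - gm u w.
Proof. by rewrite -scaleN1r gmZl mulN1r. Qed.

Lemma gm0l w : gm 0 w = 0.
Proof. by rewrite -(scale0r 0) gmZl mul0r. Qed.

Lemma gm_evl i w : gm (ev R i) w = w 0 i.
Proof.
rewrite /gm (bigD1 i) //= big1 ?addr0; first by rewrite mxE !eqxx mul1r.
by move=> j /negbTE ji; rewrite mxE ji andbF mul0r.
Qed.

Lemma linear_form_frameE (f : 'rV[R]_n -> R) :
  (forall a u v, f (a *: u + v) = a * f u + f v) ->
  forall w, f w = \sum_(i < n) w 0 i * f (ev R i).
Proof.
move=> f_lin w.
have f0 : f 0 = 0.
  apply: (addrI (f 0)); rewrite addr0.
  by have := f_lin 1 0 0; rewrite scale1r addr0 mul1r.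
have fD x y : f (x + y) = f x + f y by rewrite -{1}[x]scale1r f_lin mul1r.
rewrite {1}(row_sum_delta w) (big_morph f fD f0).
by apply: eq_bigr => i _; rewrite -[_ *: _]addr0 f_lin f0 addr0.
Qed.

End FrameInnerProduct.

Section ConformalCurvature.
Variables (R : realType) (n : nat) (Rm : curv_op R n).
Hypothesis RmZ3 : forall a X Y Z Z', Rm X Y (a *: Z + Z') = a *: Rm X Y Z + Rm X Y Z'.

Lemma gm_Qop u w : gm (Qop Rm u) w = Ric Rm u w.
Proof.
rewrite /Qop (big_morph (fun x => gm x w) (fun x y => gmDl x y w) (gm0l w)).
rewrite (@linear_form_frameE _ _ (Ric Rm u)) => [|a v v'].
  by apply: eq_bigr => i _; rewrite gmZl gm_evl mulrC.
by rewrite /Ric mulr_sumr -big_split; apply: eq_bigr => i _; rewrite RmZ3 !mxE.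
Qed.

Lemma gm_Conf X Y Z W :
  gm (Conf Rm X Y Z) W =
  Rcov Rm X Y Z W
  - (n%:R - 2)^-1 * (Ric Rm Y Z * gm X W - Ric Rm X Z * gm Y W
                     + gm Y Z * Ric Rm X W - gm X Z * Ric Rm Y W)
  + scal Rm / ((n%:R - 1) * (n%:R - 2)) * (gm Y Z * gm X W - gm X Z * gm Y W).
Proof. by rewrite /Conf /Rcov !(gmDl, gmNl, gmZl) !gm_Qop. Qed.

Hypothesis RicC : forall X Y, Ric Rm X Y = Ric Rm Y X.

Lemma gm_Conf_pseudosym F xi eta :
  conf_ricci_pseudosym_with Rm F -> (forall U, Ric Rm U xi = gm U eta) ->
  forall X Y, gm (Conf Rm X Y xi) eta = F * (gm X eta * gm Y xi - gm X xi * gm Y eta).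
Proof.
move=> pseudosym Ric_xi X Y; have := pseudosym X Y xi xi.
rewrite (RicC xi) !Ric_xi; lra.
Qed.

Hypothesis Rm_metric : forall X Y Z W, gm (Rm X Y Z) W = - gm (Rm X Y W) Z.

Lemma gm_Conf_antisym X Y Z W : gm (Conf Rm X Y Z) W = - gm (Conf Rm X Y W) Z.
Proof.
rewrite !gm_Conf /Rcov Rm_metric (RicC Y Z) (RicC X Z) (RicC Y W) (RicC X W).
by rewrite (gmC X W) (gmC Y W) (gmC X Z) (gmC Y Z); ring.
Qed.

End ConformalCurvature.

Lemma wedge_decomposition (T : Type) (R : comPzRingType) (f : T -> T -> R)
    (A B : T -> R) (d : T -> R) (x1 x2 : T) (k c : R) :
  A x1 = 1 -> A x2 = 0 -> B x1 = 0 -> B x2 = 1 ->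
  (forall X Y, f X Y = k * (B X * A Y - A X * B Y) + c * (A Y * d X - A X * d Y)) ->
  forall X Y, f X Y = ((f x2 x1 - c * d x2) * B X + c * d X) * A Y
                      - A X * ((f x2 x1 - c * d x2) * B Y + c * d Y).
Proof. by move=> A1 A2 B1 B2 fE X Y; rewrite !fE A1 A2 B1 B2; ring. Qed.

Section MixedSuperQuasiEinstein.
Variables (R : realType) (n : nat) (Rm : curv_op R n) (Psi1 Psi2 Psi3 Psi4 Psi5 : R).
Variables (xi1 xi2 : 'rV[R]_n) (D : 'rV[R]_n -> 'rV[R]_n -> R).
Hypothesis msqe : is_MSQE Rm Psi1 Psi2 Psi3 Psi4 Psi5 xi1 xi2 D.

Lemma MSQE_RicC X Y : Ric Rm X Y = Ric Rm Y X.
Proof. by case: msqe => _ _ _ [_ DC _ _] RicE; rewrite !RicE DC (gmC X Y); ring. Qed.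

Lemma MSQE_Ric_xi1 U : Ric Rm U xi1 = (Psi1 + Psi2) * gm U xi1 + Psi4 * gm U xi2.
Proof.
by case: msqe => _ _ [g11 _ g12] [_ _ _ D_xi1] RicE; rewrite RicE D_xi1 g11 g12; ring.
Qed.

Lemma MSQE_Ric_xi2 U :
  Ric Rm U xi2 = (Psi1 + Psi3) * gm U xi2 + Psi4 * gm U xi1 + Psi5 * D U xi2.
Proof. by case: msqe => _ _ [_ g22 g12] _ RicE; rewrite RicE g22 (gmC xi2) g12; ring. Qed.

Hypothesis curv : is_curvature Rm.
Variable F : R.
Hypothesis pseudosym : conf_ricci_pseudosym_with Rm F.

Lemma MSQE_gm_Conf_xi1_xi2 X Y :
  gm (Conf Rm X Y xi1) xi2 = F * (gm X xi2 * gm Y xi1 - gm X xi1 * gm Y xi2).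
Proof.
case: msqe => _ [_ _ Psi4_neq0 _] _ _ _.
case: curv => _ _ RmZ3 _ [Rm_metric _].
have Ric_xi1 U : Ric Rm U xi1 = gm U ((Psi1 + Psi2) *: xi1 + Psi4 *: xi2).
  by rewrite MSQE_Ric_xi1 (gmC U (_ + _)) gmDl !gmZl !(gmC _ U).
have Conf_xi1_xi1 : gm (Conf Rm X Y xi1) xi1 = 0.
  by have := gm_Conf_antisym RmZ3 MSQE_RicC Rm_metric X Y xi1 xi1; lra.
have := gm_Conf_pseudosym MSQE_RicC pseudosym Ric_xi1 X Y.
rewrite -!Ric_xi1 !MSQE_Ric_xi1 Conf_xi1_xi1 => h.
by apply: (mulfI Psi4_neq0); lra.
Qed.

Lemma MSQE_Rcov_xi1_xi2 : exists k, forall X Y,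
  Rcov Rm X Y xi1 xi2 = k * (gm X xi2 * gm Y xi1 - gm X xi1 * gm Y xi2)
                        + Psi5 / (n%:R - 2) * (gm Y xi1 * D X xi2 - gm X xi1 * D Y xi2).
Proof.
case: curv => _ _ RmZ3 _ _.
exists (F + (n%:R - 2)^-1 * (2 * Psi1 + Psi2 + Psi3)
        - scal Rm / ((n%:R - 1) * (n%:R - 2))) => X Y.
have := gm_Conf RmZ3 X Y xi1 xi2.
rewrite MSQE_gm_Conf_xi1_xi2 !MSQE_Ric_xi1 !MSQE_Ric_xi2 => h.
rewrite [Psi5 / _]mulrC; lra.
Qed.

End MixedSuperQuasiEinstein.

Theorem mainTheorem3 (R : realType) (n : nat) (Rm : curv_op R n)
  (Psi1 Psi2 Psi3 Psi4 Psi5 : R) (xi1 xi2 : 'rV[R]_n)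
  (D : 'rV[R]_n -> 'rV[R]_n -> R) (F : R) :
  (3 <= n)%N ->
  is_curvature Rm ->
  is_MSQE Rm Psi1 Psi2 Psi3 Psi4 Psi5 xi1 xi2 D ->
  in_U_Ric Rm ->
  conf_ricci_pseudosym_with Rm F ->
  let m := - ((n%:R - 2) * Rcov Rm xi2 xi1 xi1 xi2) / Psi5 + D xi2 xi2 in
  let E := fun X : 'rV[R]_n =>
    (Rcov Rm xi2 xi1 xi1 xi2 - Psi5 / (n%:R - 2) * D xi2 xi2) * gm X xi2
    + Psi5 / (n%:R - 2) * D X xi2 in
  (~ is_eigen D m xi2 ->
     forall X Y, Rcov Rm X Y xi1 xi2 = E X * gm Y xi1 - gm X xi1 * E Y) /\
  (is_eigen D m xi2 ->
     forall X Y, Rcov Rm X Y xi1 xi2 = 0).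
Proof.
move=> n_ge3 curv msqe _ pseudosym m E.
have n2_neq0 : n%:R - 2 != 0 :> R by rewrite subr_eq0 gt_eqF // (ltr_nat R 2 n).
case: (msqe) => _ [_ _ _ Psi5_neq0] [g11 g22 g12] _ _.
have g21 : gm xi2 xi1 = 0 by rewrite gmC.
have [k RcovE] := MSQE_Rcov_xi1_xi2 msqe curv pseudosym.
have part1 X Y : Rcov Rm X Y xi1 xi2 = E X * gm Y xi1 - gm X xi1 * E Y.
  exact: (@wedge_decomposition _ _ (fun X Y => Rcov Rm X Y xi1 xi2)
            (fun X => gm X xi1) (fun X => gm X xi2) (D^~ xi2) xi1 xi2 k _
            g11 g21 g12 g22 RcovE).
split=> [_ | eig]; first exact: part1.
have R2112_eq0 : Rcov Rm xi2 xi1 xi1 xi2 = 0.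
  have : (n%:R - 2) * Rcov Rm xi2 xi1 xi1 xi2 / Psi5 == 0.
    by apply/eqP; have := eig xi2; rewrite g22 mulr1 /m; lra.
  by rewrite !mulf_eq0 invr_eq0 (negbTE Psi5_neq0) (negbTE n2_neq0) /= orbF => /eqP.
have E_eq0 X : E X = 0.
  by rewrite /E (eig X) /m R2112_eq0 mulr0 oppr0 mul0r !add0r mulNr mulrA addNr.
by move=> X Y; rewrite part1 !E_eq0 mul0r mulr0 subr0.
Qed.
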